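(* Assume the loss $L$ satisfies the regularity conditions (C1)–(C4) below, that $\theta\mapsto L(\theta\mid x,y)$, $\theta\mapsto E_{(X,Y)\sim\mathbb{P}}L(\theta\mid X,Y)$ and $\theta\mapsto\pi(\theta,\lambda)$ are (sub)differentiable, and that the model is over-parameterized with respect to $\hat{\mathbb{P}}$, i.e. $\Theta_*\cap\Theta_\Lambda\neq\emptyset$. Then the AM estimator $\theta^*_{AM}=\mathfrak{A}_\theta(\hat{\mathbb{P}},\mathbb{P})$ satisfies $\theta^*_{AM}\in\Theta_*$. Moreover, if the loss is the negative log-likelihood, $L(\theta\mid x,y)=-\log p'(\theta\mid x,y)$, then for every $\theta^*\in\Theta_*$, $$D_{KL}(\mathbb{P},\mathbb{P}_{\theta^*_{AM}})=D_{KL}(\mathbb{P},\mathbb{P}_{\theta^*}).$$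
   Context: A sample $S=\{(x_i,y_i)\}_{i=1}^n$ is drawn i.i.d. from an unknown population $\mathbb{P}$ on $\mathbf{W}\subset\mathbb{R}^{k}\times\mathbb{R}^{q}$; $\hat{\mathbb{P}}$ denotes its empirical distribution. A parametric model $\{\mathbb{P}_\theta:\theta\in\Theta\}$, $\Theta=\Theta^{(n)}\subseteq\mathbb{R}^p$, with likelihood $p'(\theta\mid x,y)$ and loss $L(\theta\mid x,y)$ is given. $\Theta_*=\Theta^{(n)}_*=\{\theta\in\Theta: E_{\mathbb{P}}L(\theta\mid X,Y)=\min_{\tilde\theta\in\Theta}E_{\mathbb{P}}L(\tilde\theta\mid X,Y)\}$ (the ''most plausible'' parameters). A duality function $\pi(\theta,\lambda)$, $\theta\in\Theta$, $\lambda\in\Lambda$ (hyper-parameter set) is fixed. For distributions $\mathbb{P}_{obs},\mathbb{P}_{fut}$ define $G_{\mathbb{P}_{obs}}(\theta,\lambda)=E_{\mathbb{P}_{obs}}L(\theta\mid X,Y)+\pi(\theta,\lambda)$ and $V_{\mathbb{P}_{fut},\mathbb{P}_{obs}}(\theta,\lambda)=E_{\mathbb{P}_{fut}}L(\theta\mid X,Y)-E_{\mathbb{P}_{obs}}L(\theta\mid X,Y)-\pi(\theta,\lambda)$. An AM equilibrium pair for $(\mathbb{P}_{obs},\mathbb{P}_{fut})$ is $(\hat\theta,\hat\lambda)$ with $\hat\theta\in\arg\min_\theta G_{\mathbb{P}_{obs}}(\theta,\hat\lambda)$ and $\hat\lambda\in\arg\min_{\lambda\in\Lambda}\sum_{i=1}^p\left|\partial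 V_{\mathbb{P}_{fut},\mathbb{P}_{obs}}(\theta,\lambda)/\partial\theta_i\right|_{\theta=\hat\theta}$. The AM operator $\mathfrak{A}_\theta(\mathbb{P}_{obs},\mathbb{P}_{fut})\in\mathbb{R}^p$ returns the $\hat\theta$ of an AM equilibrium pair that is globally optimal for $E_{\mathbb{P}_{fut}}L(\theta\mid X,Y)$ among equilibrium pairs (global optimality is assumed). $\Theta_\Lambda=\{\theta\in\Theta: G_{\hat{\mathbb{P}}}(\theta,\lambda)=\min_{\tilde\theta\in\Theta}G_{\hat{\mathbb{P}}}(\tilde\theta,\lambda)\text{ for some }\lambda\in\Lambda\}$. Regularity conditions: (C1) for each $\theta$, $L(\theta\mid\cdot)$ is Borel measurable on $\mathbf{W}$; (C2) for each $(x,y)\in\mathbf{W}$, $L(\cdot\mid x,y)$ is continuous on $\Theta$; (C3) $|L(\theta\mid x,y)|<b(x,y)$ for all $\theta$, with $b\ge0$ and $E|b(X,Y)|<\infty$; (C4) $\arg\min_{\theta\in\Theta}E_{\mathbb{P}}L(\theta\mid X,Y)$ exists. $D_{KL}$ is Kullback–Leibler divergence. *)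

From HB Require Import structures.
From mathcomp Require Import all_boot all_order all_algebra.
From mathcomp Require Import all_classical all_reals all_analysis.
Set Implicit Arguments. Unset Strict Implicit. Unset Printing Implicit Defensive.
Import Order.TTheory GRing.Theory Num.Theory.
Import numFieldNormedType.Exports.
Local Open Scope classical_set_scope.
Local Open Scope ring_scope.

Section AMDefs.
Variable R : realType.


Definition partial (p : nat) (f : 'rV[R]_p -> R) (i : 'I_p) (th : 'rV[R]_p) : R :=
  'D_(delta_mx 0 i) f th.

Definition grad_l1 (p : nat) (f : 'rV[R]_p -> R) (th : 'rV[R]_p) : R :=
  \sum_(i < p) `| partial f i th |.

Definition pop_risk (d : measure_display) (T : measurableType d)
  (P : probability T R) (W : set T) (p : nat) (L : 'rV[R]_p -> T -> R)
  (th : 'rV[R]_p) : R :=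
  Rintegral P W (L th).

(* E_{\hat P} L(theta | X, Y) for the empirical distribution of the sample S *)
Definition emp_risk (T : Type) (n : nat) (S : 'I_n -> T) (p : nat)
  (L : 'rV[R]_p -> T -> R) (th : 'rV[R]_p) : R :=
  (n%:R)^-1 * \sum_(i < n) L th (S i).

Definition Gfun (p : nat) (Lam : Type) (Eobs : 'rV[R]_p -> R)
  (pi : 'rV[R]_p -> Lam -> R) (th : 'rV[R]_p) (la : Lam) : R :=
  Eobs th + pi th la.

Definition Vfun (p : nat) (Lam : Type) (Efut Eobs : 'rV[R]_p -> R)
  (pi : 'rV[R]_p -> Lam -> R) (th : 'rV[R]_p) (la : Lam) : R :=
  Efut th - Eobs th - pi th la.

(* (th, la) is an AM equilibrium pair for (P_obs, P_fut), where Eobs, Efut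
   are the expected-loss functions theta |-> E_{P_obs} L, E_{P_fut} L. *)
Definition AM_equilibrium (p : nat) (Lam : Type) (Theta : set 'rV[R]_p)
  (Lset : set Lam) (Eobs Efut : 'rV[R]_p -> R) (pi : 'rV[R]_p -> Lam -> R)
  (th : 'rV[R]_p) (la : Lam) : Prop :=
  [/\ Theta th, Lset la,
      (forall t, Theta t -> Gfun Eobs pi th la <= Gfun Eobs pi t la) &
      (forall l, Lset l ->
         grad_l1 (fun t => Vfun Efut Eobs pi t la) th
         <= grad_l1 (fun t => Vfun Efut Eobs pi t l) th)].

Definition AM_operator (p : nat) (Lam : Type) (Theta : set 'rV[R]_p)
  (Lset : set Lam) (Eobs Efut : 'rV[R]_p -> R) (pi : 'rV[R]_p -> Lam -> R)
  (th : 'rV[R]_p) : Prop :=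
  (exists2 la, Lset la & AM_equilibrium Theta Lset Eobs Efut pi th la) /\
  (forall th' la', AM_equilibrium Theta Lset Eobs Efut pi th' la' ->
     Efut th <= Efut th').

Definition Theta_star (p : nat) (Theta : set 'rV[R]_p) (Epop : 'rV[R]_p -> R)
  : set 'rV[R]_p :=
  [set th | Theta th /\ forall t, Theta t -> Epop th <= Epop t].

Definition Theta_Lambda (p : nat) (Lam : Type) (Theta : set 'rV[R]_p)
  (Lset : set Lam) (Eemp : 'rV[R]_p -> R) (pi : 'rV[R]_p -> Lam -> R)
  : set 'rV[R]_p :=
  [set th | Theta th /\ exists2 la, Lset la &
     forall t, Theta t -> Gfun Eemp pi th la <= Gfun Eemp pi t la].

Definition has_density (d : measure_display) (T : measurableType d)
  (mu : {measure set T -> \bar R}) (Q : set T -> \bar R) (q : T -> R) : Prop :=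
  [/\ (forall x, 0 <= q x), measurable_fun setT q &
      forall A, measurable A -> Q A = (\int[mu]_(x in A) (q x)%:E)%E].

(* Kullback-Leibler divergence D_KL(P, Q) = E_P [ log (dP/dQ) ], where
   p and q are densities of P and Q w.r.t. a common base measure (so that
   dP/dQ = p / q). *)
Definition KL_div (d : measure_display) (T : measurableType d)
  (P : {measure set T -> \bar R}) (p q : T -> R) : \bar R :=
  (\int[P]_x (ln (p x / q x))%:E)%E.

End AMDefs.

From HB Require Import structures.
From mathcomp Require Import all_boot all_order all_algebra.
From mathcomp Require Import all_classical all_reals all_analysis.
From mathcomp Require Import measurable_realfun.
Import Order.TTheory GRing.Theory Num.Theory.
Import numFieldNormedType.Exports.
Local Open Scope classical_set_scope.
Local Open Scope ring_scope.

(* Over-parameterisation provides a parameter th0 minimising both the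
   population risk and G_{\hat P}(., la0) on the open set Theta.  Both
   gradients vanish at th0, hence so does that of V = E_P L - G_{\hat P}, so
   (th0, la0) is an AM equilibrium; the AM estimator is optimal for E_P L
   among equilibria, so it is also a population risk minimiser.
   For the negative log-likelihood, D_KL(P, P_th) = E_P[log p] + E_P L(th | .),
   where the first term may be infinite but adding the finite integral of an
   integrable function is still additive; hence all population risk
   minimisers have the same divergence. *)

Section derivative_along_line.
Context {R : realFieldType} {V : normedModType R}.
Variables (f : V -> R) (a v : V).

Let line_quotientE t :
  (fun h : R => h^-1 *: (((fun r : R => f (a + r *: v)) \o shift t) (h *: 1)
                         - f (a + t *: v))) =
  (fun h => h^-1 *: ((f \o shift (a + t *: v)) (h *: v) - f (a + t *: v))).
Proof.
by apply/funext => h /=; rewrite scaler1 scalerDl addrA [_ + h *: v]addrC addrA.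
Qed.

Lemma derivable_along_line t :
  derivable (fun r : R => f (a + r *: v)) t 1 = derivable f (a + t *: v) v.
Proof. by rewrite /derivable line_quotientE. Qed.

Lemma derive_along_line t :
  'D_1 (fun r : R => f (a + r *: v)) t = 'D_v f (a + t *: v).
Proof. by rewrite /derive line_quotientE. Qed.

End derivative_along_line.

Lemma derive_eq0_at_min {R : realFieldType} {V : normedModType R}
    {D : set V} {f : V -> R} {a v : V} :
  open D -> D a -> (forall x, D x -> derivable f x v) ->
  (forall x, D x -> f a <= f x) -> 'D_v f a = 0.
Proof.
move=> oD Da fdrv fmin.
have line_near : \forall r \near (0 : R), D (a + r *: v).
  have : (fun r : R => a + r *: v) @ (0 : R) --> a + 0 *: v.
    by apply: cvgD; [exact: cvg_cst | apply: cvgZr_tmp; exact: cvg_id].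
  by rewrite scale0r addr0; apply; exact: open_nbhs_nbhs.
have /nbhs_ballP[e e0 De] := line_near.
have Dline t : t \in `](- e), e[ -> D (a + t *: v).
  rewrite in_itv /= => /andP[et te]; apply: De.
  by rewrite /ball /= sub0r normrN ltr_norml et te.
have := derive_along_line f a v 0; rewrite scale0r addr0 => <-.
apply: derive_val; apply: (@derive1_at_min _ _ (- e) e).
- by apply: (@le_trans _ _ 0); rewrite ?oppr_le0 ltW.
- by move=> t /Dline Dt; rewrite derivable_along_line; exact: fdrv.
- by rewrite in_itv /= oppr_lt0 e0.
- by move=> t /Dline; rewrite scale0r addr0; exact: fmin.
Qed.

Section AM_equilibria.
Context {R : realType} {p : nat} {Lam : Type}.
Context {Theta : set 'rV[R]_p} {Lset : set Lam}.
Context {Eobs Efut : 'rV[R]_p -> R} { pi : 'rV[R]_p -> Lam -> R }.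
Hypothesis oTheta : open Theta.

Lemma grad_l1_ge0 (f : 'rV[R]_p -> R) th : 0 <= grad_l1 f th.
Proof. by apply: sumr_ge0 => i _; exact: normr_ge0. Qed.

Lemma partial_eq0_at_min {f : 'rV[R]_p -> R} {th0} :
  Theta th0 -> (forall t, Theta t -> differentiable f t) ->
  (forall t, Theta t -> f th0 <= f t) -> forall i, partial f i th0 = 0.
Proof.
move=> Tth0 fdiff fmin i; apply: (derive_eq0_at_min oTheta Tth0 _ fmin) => t Tt.
exact/diff_derivable/fdiff.
Qed.

Lemma grad_l1_eq0_at_common_min {f g : 'rV[R]_p -> R} {th0} :
  Theta th0 ->
  (forall t, Theta t -> differentiable f t) ->
  (forall t, Theta t -> differentiable g t) ->
  (forall t, Theta t -> f th0 <= f t) -> (forall t, Theta t -> g th0 <= g t) ->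
  grad_l1 (f - g) th0 = 0.
Proof.
move=> Tth0 fdiff gdiff fmin gmin; rewrite /grad_l1 big1 // => i _.
rewrite /partial deriveB; last 2 first.
- exact/diff_derivable/fdiff.
- exact/diff_derivable/gdiff.
by rewrite -!/(partial _ i th0) (partial_eq0_at_min Tth0 fdiff fmin)
  (partial_eq0_at_min Tth0 gdiff gmin) subrr normr0.
Qed.

Hypothesis Efut_diff : forall th, Theta th -> differentiable Efut th.
Hypothesis Eobs_diff : forall th, Theta th -> differentiable Eobs th.
Hypothesis pi_diff :
  forall la, Lset la -> forall th, Theta th -> differentiable (pi ^~ la) th.

Lemma AM_equilibrium_common_min {th0 la0} :
  Lset la0 -> Theta_star Theta Efut th0 ->
  (forall t, Theta t -> Gfun Eobs pi th0 la0 <= Gfun Eobs pi t la0) ->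
  AM_equilibrium Theta Lset Eobs Efut pi th0 la0.
Proof.
move=> Lla0 [Tth0 Efut_min] Gmin; split => // la _.
have -> : (fun t => Vfun Efut Eobs pi t la0) = Efut - (Gfun Eobs pi ^~ la0).
  by apply/funext => t; rewrite /Vfun /Gfun /= opprD addrA.
rewrite (grad_l1_eq0_at_common_min Tth0 Efut_diff _ Efut_min Gmin).
  exact: grad_l1_ge0.
move=> t Tt.
have -> : Gfun Eobs pi ^~ la0 = Eobs + pi ^~ la0 by [].
by apply: differentiableD; [exact: Eobs_diff | exact: pi_diff].
Qed.

Lemma AM_operator_Theta_star {thAM} :
  (Theta_star Theta Efut `&` Theta_Lambda Theta Lset Eobs pi) !=set0 ->
  AM_operator Theta Lset Eobs Efut pi thAM -> Theta_star Theta Efut thAM.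
Proof.
move=> [th0 [th0_star [_ [la0 Lla0 Gmin]]]] [[_ _ [TthAM _ _ _]] AM_opt].
split => // t Tt; apply: le_trans (th0_star.2 _ Tt).
exact: AM_opt (AM_equilibrium_common_min Lla0 th0_star Gmin).
Qed.

End AM_equilibria.

Lemma differentiable_emp_risk (R : realType) (T : Type) (n p : nat)
    (S : 'I_n -> T) (L : 'rV[R]_p -> T -> R) th :
  (forall i, differentiable (L ^~ (S i)) th) -> differentiable (emp_risk S L) th.
Proof.
move=> Ldiff.
have -> : emp_risk S L = n%:R^-1 *: \sum_(i < n) L ^~ (S i).
  by apply/funext => t; rewrite /emp_risk /= fct_sumE.
by apply: differentiableZ; apply: differentiable_sum.
Qed.

Lemma sube_not_lty (R : realDomainType) (a b : \bar R) :
  ~~ ((a < +oo) && (b < +oo))%E -> (a - b = if b < +oo then +oo else -oo)%E.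
Proof.
case: b => [r| |] /=.
- by rewrite ltry andbT ltey negbK => /eqP ->.
- by rewrite ltxx addeNy.
- by rewrite ltNye andbT ltey negbK => /eqP ->.
Qed.

Section integral_add_integrable.
Local Open Scope ereal_scope.
Context d (T : measurableType d) (R : realType) (mu : {measure set T -> \bar R}).
Variables (D : set T) (mD : measurable D).

Let integrable_EFinN {g : T -> R} : mu.-integrable D (EFin \o g) ->
  mu.-integrable D (EFin \o (fun x => - g x)%R).
Proof. by move=> ig; apply: eq_integrable mD _ _ _ (integrableN ig) => x _ /=. Qed.

Let funepos_addr_lty {f g : T -> R} :
  measurable_fun D f -> mu.-integrable D (EFin \o g) ->
  \int[mu]_(x in D) (EFin \o f)^\+ x < +oo ->
  \int[mu]_(x in D) (EFin \o (f \+ g)%R)^\+ x < +oo.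
Proof.
move=> mf ig flty; have /integrableP[mEg glty] := ig.
have mg : measurable_fun D g by exact: (measurable_EFinP D g).1.
have mEf : measurable_fun D (EFin \o f) by exact/measurable_EFinP.
apply: le_lt_trans (_ : _ <= \int[mu]_(x in D) ((EFin \o f)^\+ x + `|(g x)%:E|)) _.
  apply: ge0_le_integral => //.
  - by apply/measurable_funepos/measurable_EFinP; exact: measurable_funD.
  - apply: emeasurable_funD; first exact: measurable_funepos.
    exact: measurableT_comp.
  move=> x _; rewrite !funeposE /= -[0%R]/(0%:E) -!EFin_max -EFinD lee_fin.
  rewrite ge_max lerD ?le_max ?lexx ?ler_norm //=.
  by rewrite addr_ge0 // le_max lexx orbT.
rewrite ge0_integralD //; last 2 first.
- exact: measurable_funepos.
- exact: measurableT_comp.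
exact: lte_add_pinfty.
Qed.

Lemma integral_funepos_addr_lty {f g : T -> R} :
  measurable_fun D f -> mu.-integrable D (EFin \o g) ->
  (\int[mu]_(x in D) (EFin \o (f \+ g)%R)^\+ x < +oo) =
  (\int[mu]_(x in D) (EFin \o f)^\+ x < +oo).
Proof.
move=> mf ig; apply/idP/idP; last exact: funepos_addr_lty.
have mg : measurable_fun D g by exact: (measurable_EFinP D g).1 (measurable_int mu ig).
move=> /(funepos_addr_lty (measurable_funD mf mg) (integrable_EFinN ig)).
by congr (_ < _); apply: eq_integral => x _; rewrite /= !funeposE /= addrK.
Qed.

Lemma integral_funeneg_addr_lty {f g : T -> R} :
  measurable_fun D f -> mu.-integrable D (EFin \o g) ->
  (\int[mu]_(x in D) (EFin \o (f \+ g)%R)^\- x < +oo) =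
  (\int[mu]_(x in D) (EFin \o f)^\- x < +oo).
Proof.
move=> mf ig.
have funeneg_EFinE (u : T -> R) :
    (EFin \o u)^\- = (EFin \o (fun x => - u x)%R)^\+.
  by rewrite -funeposN; congr (_^\+); apply/funext => x /=.
rewrite !funeneg_EFinE.
rewrite -(integral_funepos_addr_lty (measurable_funN mf) (integrable_EFinN ig)).
by congr (_ < _); apply: eq_integral => x _; rewrite !funeposE /= opprD.
Qed.

Lemma integralD_integrable (f g : T -> R) :
  measurable_fun D f -> mu.-integrable D (EFin \o g) ->
  \int[mu]_(x in D) (f x + g x)%:E =
  \int[mu]_(x in D) (f x)%:E + \int[mu]_(x in D) (g x)%:E.
Proof.
move=> mf ig; have [if_|nif] := pselect (mu.-integrable D (EFin \o f)).
  by under eq_integral do rewrite EFinD; exact: integralD.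
have f_not_fin : ~~ ((\int[mu]_(x in D) (EFin \o f)^\+ x < +oo) &&
                    (\int[mu]_(x in D) (EFin \o f)^\- x < +oo)).
  apply/negP => /andP[plty nlty]; apply: nif; apply/integrableP.
  split; first exact/measurable_EFinP.
  rewrite (eq_integral ((EFin \o f)^\+ \+ (EFin \o f)^\-)); last first.
    by move=> x _; rewrite -[LHS]/((abse \o (EFin \o f)) x) fune_abse.
  rewrite ge0_integralD //; first exact: lte_add_pinfty.
  - by apply: measurable_funepos; exact/measurable_EFinP.
  - by apply: measurable_funeneg; exact/measurable_EFinP.
(* Both integrals are then the same infinite value, fixed by which of the
   positive and negative parts has a finite integral. *)
rewrite (integralE _ _ (EFin \o (f \+ g)%R)) (integralE _ _ (EFin \o f)).
rewrite !sube_not_lty ?integral_funepos_addr_lty ?integral_funeneg_addr_lty //.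
have /fin_numP[gNoo gPoo] := integrable_fin_num mD ig.
by case: ifP; rewrite ?addye ?addNye.
Qed.

End integral_add_integrable.

Section KL_div_cross_entropy.
Context {d} {T : measurableType d} {R : realType}.
Variables (P : probability T R) (mu : {measure set T -> \bar R}).

Lemma ae_probability1 {W : set T} :
  measurable W -> P W = 1%E -> {ae P, forall x, W x}.
Proof.
move=> mW PW; apply/negligibleP; first exact: measurableC.
by have := probability_setC P mW; rewrite PW subee.
Qed.

Lemma ae_density_gt0 {pP : T -> R} :
  has_density mu P pP -> {ae P, forall x, 0 < pP x}.
Proof.
move=> [pP_ge0 mpP Pdens].
have mpP0 : measurable (pP @^-1` [set 0]).
  by rewrite -[_ @^-1` _]setTI; apply: mpP => //; exact: measurable_set1.
apply: (@negligibleS _ _ _ _ (pP @^-1` [set 0])).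
  by move=> x /= /negP; rewrite lt_def pP_ge0 andbT negbK => /eqP.
apply/negligibleP => //; apply: eq_trans (Pdens _ mpP0) _.
by rewrite integral0_eq // => x /= ->.
Qed.

Lemma KL_div_cross_entropy (W : set T) (pP l L : T -> R) :
  measurable W -> P W = 1%E -> has_density mu P pP ->
  measurable_fun setT l -> (forall x, 0 <= l x) ->
  (forall x, W x -> 0 < l x) -> (forall x, W x -> L x = - ln (l x)) ->
  P.-integrable W (EFin \o L) ->
  KL_div P pP l = (\int[P]_x (ln (pP x))%:E + (Rintegral P W L)%:E)%E.
Proof.
move=> mW PW densP ml l_ge0 l_gt0 L_nll iL.
have [_ mpP _] := densP.
have mlnpP : measurable_fun setT (fun x => ln (pP x)) by exact: measurableT_comp.
have iLW : P.-integrable setT (EFin \o (L \_ W)).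
  by rewrite -restrict_EFin; exact/(integrable_mkcond _ mW).
rewrite /KL_div (@ae_eq_integral _ _ _ P _ (fun x => (ln (pP x) + (L \_ W) x)%:E)) //.
- rewrite integralD_integrable // /Rintegral fineK; last exact: integrable_fin_num.
  by rewrite [in RHS]integral_mkcond restrict_EFin.
- apply/measurable_EFinP; apply: measurableT_comp => //.
  have -> : (fun x => pP x / l x) = (pP \* (fun x => l x `^ (-1)))%R.
    by apply/funext => x /=; rewrite powR_inv1.
  apply: measurable_funM => //.
  exact: measurableT_comp (measurable_powR _) ml.
- apply/measurable_EFinP; apply: measurable_funD => //.
  exact: (measurable_EFinP _ _).1 (measurable_int P iLW).
have Wae := ae_probability1 mW PW; have pPae := ae_density_gt0 densP.
near=> x => _.
have Wx : W x by near: x.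
have pPx : 0 < pP x by near: x.
rewrite patchE mem_set // L_nll // lnM ?posrE ?invr_gt0 ?l_gt0 //.
by rewrite lnV ?posrE ?l_gt0.
Unshelve. all: by end_near.
Qed.

End KL_div_cross_entropy.

Theorem theorem1 (R : realType) (k q p n : nat) (Lam : Type)
  (W : set (k.-tuple R * q.-tuple R)%type)
  (P : probability (k.-tuple R * q.-tuple R)%type R)
  (S : 'I_n -> (k.-tuple R * q.-tuple R)%type)
  (Theta : set 'rV[R]_p) (Lset : set Lam)
  (L : 'rV[R]_p -> (k.-tuple R * q.-tuple R)%type -> R)
  (pi : 'rV[R]_p -> Lam -> R)
  (b : (k.-tuple R * q.-tuple R)%type -> R)
  (thAM : 'rV[R]_p) :
  (* sample of size n > 0 drawn from P, supported on W *)
  (0 < n)%N ->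
  measurable W -> P W = 1%E -> (forall i, W (S i)) ->
  (* the parameter set Theta is an open subset of R^p *)
  open Theta ->
  (* (C1) *)
  (forall th, Theta th -> measurable_fun W (L th)) ->
  (* (C2) *)
  (forall w, W w -> {within Theta, continuous (fun th => L th w)}) ->
  (* (C3) *)
  (forall w, W w -> 0 <= b w) ->
  (forall th w, Theta th -> W w -> `|L th w| < b w) ->
  P.-integrable W (fun w => (b w)%:E) ->
  (* (C4) *)
  (exists th, Theta_star Theta (pop_risk P W L) th) ->
  (* differentiability *)
  (forall w, W w -> forall th, Theta th ->
     differentiable (fun t => L t w) th) ->
  (forall th, Theta th -> differentiable (pop_risk P W L) th) ->
  (forall la, Lset la -> forall th, Theta th ->
     differentiable (fun t => pi t la) th) ->
  (* over-parameterization w.r.t. the empirical distribution *)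
  (Theta_star Theta (pop_risk P W L)
     `&` Theta_Lambda Theta Lset (emp_risk S L) pi) !=set0 ->
  (* thAM = A_theta(\hat P, P) *)
  AM_operator Theta Lset (emp_risk S L) (pop_risk P W L) pi thAM ->
  Theta_star Theta (pop_risk P W L) thAM /\
  (forall (mu : {measure set (k.-tuple R * q.-tuple R)%type -> \bar R})
          (pP : (k.-tuple R * q.-tuple R)%type -> R)
          (lik : 'rV[R]_p -> (k.-tuple R * q.-tuple R)%type -> R)
          (Pm : 'rV[R]_p -> probability (k.-tuple R * q.-tuple R)%type R),
     has_density mu P pP ->
     (forall th, Theta th -> has_density mu (Pm th) (lik th)) ->
     (forall th w, Theta th -> W w -> 0 < lik th w) ->
     (forall th w, Theta th -> W w -> L th w = - ln (lik th w)) ->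
     forall ths, Theta_star Theta (pop_risk P W L) ths ->
       KL_div P pP (lik thAM) = KL_div P pP (lik ths)).
Proof.
move=> _ mW PW WS oTheta mL _ b_ge0 Lb ib _ Ldiff Efut_diff pi_diff overparam AMop.
have Eobs_diff th : Theta th -> differentiable (emp_risk S L) th.
  by move=> Tth; apply: differentiable_emp_risk => i; exact: Ldiff.
have AM_star :=
  AM_operator_Theta_star oTheta Efut_diff Eobs_diff pi_diff overparam AMop.
split=> // mu pP lik Pm densP densPm lik_gt0 L_nll ths [Tths ths_min].
have iL th : Theta th -> P.-integrable W (EFin \o L th).
  move=> Tth; apply: le_integrable ib => //.
    by apply/measurable_EFinP; exact: mL.
  by move=> x Wx /=; rewrite lee_fin (ger0_norm (b_ge0 _ Wx)); exact/ltW/Lb.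
have KLE th : Theta th -> KL_div P pP (lik th) =
    (\int[P]_x (ln (pP x))%:E + (pop_risk P W L th)%:E)%E.
  move=> Tth; have [lik_ge0 mlik _] := densPm th Tth.
  apply: (KL_div_cross_entropy P mu) => //.
  - by move=> x; exact: lik_gt0.
  - by move=> x; exact: L_nll.
  - exact: iL.
have [TthAM thAM_min] := AM_star.
rewrite !KLE //; congr (_ + _%:E)%E.
by apply/eqP; rewrite eq_le thAM_min // ths_min.
Qed.
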